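(* Let $S_0=\{x\in\mathbb{C}:0<{\rm Im}(x)<\pi\}$. Then for all $x,y\in S_0$: (1) $j^*_{S_0}(x,y)\le p_{S_0}(x,y)\le\sqrt2\,j^*_{S_0}(x,y)$; (2) $j^*_{S_0}(x,y)\le s_{S_0}(x,y)\le\sqrt2\,j^*_{S_0}(x,y)$; (3) $p_{S_0}(x,y)/\sqrt2\le s_{S_0}(x,y)\le p_{S_0}(x,y)$. Furthermore, in each case the constants are sharp.
   Context: For a domain $G\subsetneq\mathbb{C}$, $d_G(x)=\inf\{|x-z|:z\in\partial G\}$, $s_G(x,y)=\frac{|x-y|}{\inf_{z\in\partial G}(|x-z|+|z-y|)}$, $j^*_G(x,y)=\frac{|x-y|}{|x-y|+2\min\{d_G(x),d_G(y)\}}$, $p_G(x,y)=\frac{|x-y|}{\sqrt{|x-y|^2+4d_G(x)d_G(y)}}$. *)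

From Stdlib Require Import Reals.
From Coquelicot Require Import Coquelicot.
Open Scope R_scope.

Definition boundary (G : C -> Prop) (z : C) : Prop :=
  forall eps : R, 0 < eps ->
    (exists w : C, G w /\ Cmod (Cminus w z) < eps) /\
    (exists w : C, ~ G w /\ Cmod (Cminus w z) < eps).

Definition dist_bd (G : C -> Prop) (x : C) : R :=
  real (Glb_Rbar (fun r => exists z, boundary G z /\ r = Cmod (Cminus x z))).

Definition s_metric (G : C -> Prop) (x y : C) : R :=
  Cmod (Cminus x y) /
  real (Glb_Rbar (fun r => exists z, boundary G z /\
                              r = Cmod (Cminus x z) + Cmod (Cminus z y))).

Definition jstar (G : C -> Prop) (x y : C) : R :=
  Cmod (Cminus x y) /
  (Cmod (Cminus x y) + 2 * Rmin (dist_bd G x) (dist_bd G y)).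

Definition p_metric (G : C -> Prop) (x y : C) : R :=
  Cmod (Cminus x y) /
  sqrt (Cmod (Cminus x y) ^ 2 + 4 * dist_bd G x * dist_bd G y).

Definition S0 (z : C) : Prop := 0 < Im z < PI.

From Stdlib Require Import Reals Lra Psatz.
From Coquelicot Require Import Coquelicot.
Open Scope R_scope.

(* The boundary of S0 is the pair of lines Im z = 0 and Im z = PI, so that
   d(x) = min(Im x, PI - Im x), and the infimum I(x,y) in the denominator of
   s is squeezed between the denominators of p and j*:
     sqrt(|x-y|^2 + 4 d(x) d(y)) <= I(x,y) <= |x-y| + 2 min(d(x), d(y)).
   The left inequality comes from reflecting y in the boundary line through z
   (the broken line x -> z -> y is then no shorter than the segment from x to
   the mirror image of y); the right one from routing through the boundary
   point nearest to x or to y.  Since min(d(x),d(y))^2 <= d(x) d(y), the two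
   outer quantities differ by a factor at most sqrt 2, which gives all six
   inequalities.  Sharpness is witnessed by the horizontal pairs i, a + i (for
   which s = p and p/j* runs from sqrt 2 at a = 2 down to 1 as a -> oo) and
   by the vertical pair i PI/4, 3 i PI/4 (for which s = p / sqrt 2). *)

Lemma Glb_Rbar_bounds (E : R -> Prop) (L e0 : R) :
  (forall e, E e -> L <= e) -> E e0 ->
  L <= real (Glb_Rbar E) /\ forall e, E e -> real (Glb_Rbar E) <= e.
Proof.
  intros HL He0. destruct (Glb_Rbar_correct E) as [Hlb Hglb].
  destruct (Glb_Rbar E) as [g| |]; simpl.
  - split; [apply (Hglb (Finite L)); intros e He; apply HL, He |].
    intros e He. apply (Hlb e He).
  - destruct (Hlb e0 He0).
  - destruct (Hglb (Finite L)). intros e He. apply HL, He.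
Qed.

Lemma le_sqrt_of_sq_le X Y : 0 <= Y -> Y ^ 2 <= X -> Y <= sqrt X.
Proof. intros. rewrite <- (sqrt_pow2 Y) at 1 by assumption. now apply sqrt_le_1_alt. Qed.

Lemma lt_sqrt_of_sq_lt X Y : 0 <= Y -> Y ^ 2 < X -> Y < sqrt X.
Proof.
  intros. rewrite <- (sqrt_pow2 Y) at 1 by assumption.
  apply sqrt_lt_1_alt. split; [apply pow2_ge_0 | assumption].
Qed.

Lemma Rdiv_le_scale t A B c :
  0 <= t -> 0 < A -> 0 < B -> B <= c * A -> t / A <= c * (t / B).
Proof.
  intros. assert (E : c * (t / B) - t / A = t / (A * B) * (c * A - B)) by (field; lra).
  assert (0 <= t / (A * B)) by (apply Rdiv_le_0_compat; nra).
  nra.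
Qed.

Lemma Rdiv_lt_scale t A B c :
  0 < t -> 0 < A -> 0 < B -> B < c * A -> t / A < c * (t / B).
Proof.
  intros. assert (E : c * (t / B) - t / A = t / (A * B) * (c * A - B)) by (field; lra).
  assert (0 < t / (A * B)) by (apply Rdiv_lt_0_compat; nra).
  nra.
Qed.

Lemma add_min_le_sqrt2_sqrt_sum t a b :
  0 <= t -> 0 <= a -> 0 <= b -> t + 2 * Rmin a b <= sqrt 2 * sqrt (t ^ 2 + 4 * a * b).
Proof.
  intros. rewrite <- sqrt_mult by nra.
  assert (Hm : 0 <= Rmin a b <= a /\ Rmin a b <= b)
    by (unfold Rmin; destruct (Rle_dec a b); lra).
  assert (Rmin a b * Rmin a b <= a * b) by (apply Rmult_le_compat; lra).
  apply le_sqrt_of_sq_le; [lra |].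
  pose proof (pow2_ge_0 (t - 2 * Rmin a b)). nra.
Qed.

Lemma ratio_comparisons t Q I M :
  0 <= t -> 0 < Q -> Q <= I -> I <= M -> M <= sqrt 2 * Q ->
  (t / M <= t / Q /\ t / Q <= sqrt 2 * (t / M)) /\
  (t / M <= t / I /\ t / I <= sqrt 2 * (t / M)) /\
  (t / Q / sqrt 2 <= t / I /\ t / I <= t / Q).
Proof.
  intros Ht HQ HQI HIM HMQ.
  pose proof Rlt_sqrt2_0 as Hs2.
  assert (HI : 0 < I) by lra. assert (HM : 0 < M) by lra.
  assert (Hmono : forall A B, 0 < A -> A <= B -> t / B <= t / A).
  { intros A B HA HAB. rewrite <- (Rmult_1_l (t / A)). apply Rdiv_le_scale; lra. }
  assert (sqrt 2 * Q <= sqrt 2 * I) by (apply Rmult_le_compat_l; lra).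
  assert (t / Q <= sqrt 2 * (t / I)) by (apply Rdiv_le_scale; lra).
  split; [| split; [| split]].
  - split; [apply Hmono; lra | apply Rdiv_le_scale; lra].
  - split; [apply Hmono; lra | apply Rdiv_le_scale; lra].
  - apply (Rmult_le_reg_l (sqrt 2)); [exact Hs2 |].
    replace (sqrt 2 * (t / Q / sqrt 2)) with (t / Q) by (field; lra). assumption.
  - apply Hmono; lra.
Qed.

Lemma Cmod_sub_pair a b c d :
  Cmod (Cminus (a, b) (c, d)) = sqrt ((a - c) ^ 2 + (b - d) ^ 2).
Proof. reflexivity. Qed.

Lemma Cmod_sub_vertical a b d : Cmod (Cminus (a, b) (a, d)) = Rabs (b - d).
Proof.
  rewrite Cmod_sub_pair, <- sqrt_Rsqr_abs. f_equal. unfold Rsqr. ring.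
Qed.

Lemma Cmod_sub_sym x y : Cmod (Cminus x y) = Cmod (Cminus y x).
Proof. now rewrite <- Cmod_opp, Copp_minus_distr. Qed.

Lemma Cmod_sub_triangle x y z :
  Cmod (Cminus x z) <= Cmod (Cminus x y) + Cmod (Cminus y z).
Proof.
  replace (Cminus x z) with (Cplus (Cminus x y) (Cminus y z)) by ring.
  apply Cmod_triangle.
Qed.

Lemma Rabs_Im_sub_le_Cmod x y : Rabs (Im x - Im y) <= Cmod (Cminus x y).
Proof. exact (Rle_trans _ _ _ (Rmax_r _ _) (Rmax_Cmod (Cminus x y))). Qed.

Definition reflect_Im (h : R) (y : C) : C := (Re y, 2 * h - Im y).

Lemma Cmod_sub_reflect_Im_on_line h y z :
  Im z = h -> Cmod (Cminus z (reflect_Im h y)) = Cmod (Cminus z y).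
Proof.
  destruct y as [y1 y2], z as [z1 z2]. unfold reflect_Im, Re, Im; cbn [fst snd].
  intros ->. rewrite !Cmod_sub_pair. f_equal. ring.
Qed.

Lemma Cmod_sub_reflect_Im_sq h x y :
  Cmod (Cminus x (reflect_Im h y)) ^ 2 =
  Cmod (Cminus x y) ^ 2 + 4 * (Im x - h) * (Im y - h).
Proof.
  rewrite !Cmod2_alt. destruct x as [x1 x2], y as [y1 y2].
  unfold reflect_Im, Re, Im; simpl. ring.
Qed.

Lemma path_via_line_ge h x y z :
  Im z = h ->
  sqrt (Cmod (Cminus x y) ^ 2 + 4 * (Im x - h) * (Im y - h)) <=
  Cmod (Cminus x z) + Cmod (Cminus z y).
Proof.
  intros Hz.
  rewrite <- Cmod_sub_reflect_Im_sq, sqrt_pow2 by apply Cmod_ge_0.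
  rewrite <- (Cmod_sub_reflect_Im_on_line h y z Hz).
  apply Cmod_sub_triangle.
Qed.

Lemma PI_gt_3 : 3 < PI.
Proof. pose proof PI2_3_2. lra. Qed.

Lemma boundary_S0_iff z : boundary S0 z <-> Im z = 0 \/ Im z = PI.
Proof.
  pose proof PI_gt_3 as Hpi. split.
  - intros Hb.
    destruct (Rtotal_order (Im z) 0) as [Hlt | [Heq | Hgt]]; [| now left |].
    + destruct (Hb (- Im z) ltac:(lra)) as [[w [[Hw _] Hd]] _].
      pose proof (Rabs_Im_sub_le_Cmod w z) as H. apply Rabs_le_between in H. lra.
    + destruct (Rtotal_order (Im z) PI) as [Hlt | [Heq | Hgt']]; [| now right |].
      * set (r := Rmin (Im z) (PI - Im z)).
        assert (Hr : 0 < r <= Im z /\ r <= PI - Im z)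
          by (unfold r, Rmin; destruct (Rle_dec (Im z) (PI - Im z)); lra).
        destruct (Hb r ltac:(lra)) as [_ [w [Hw Hd]]].
        pose proof (Rabs_Im_sub_le_Cmod w z) as H. apply Rabs_le_between in H.
        exfalso. apply Hw. unfold S0. lra.
      * destruct (Hb (Im z - PI) ltac:(lra)) as [[w [[_ Hw] Hd]] _].
        pose proof (Rabs_Im_sub_le_Cmod w z) as H. apply Rabs_le_between in H. lra.
  - destruct z as [a b]. unfold Im; cbn [snd]. intros Hz eps Heps.
    set (d := Rmin (eps / 2) 1).
    assert (Hd : 0 < d <= eps / 2 /\ d <= 1)
      by (unfold d, Rmin; destruct (Rle_dec (eps / 2) 1); lra).
    split.
    + destruct Hz as [-> | ->]; [exists (a, d) | exists (a, PI - d)];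
        rewrite Cmod_sub_vertical; unfold S0, Im; cbn [snd];
        [rewrite Rabs_right | rewrite Rabs_left]; lra.
    + exists (a, b). rewrite Cmod_sub_vertical, Rminus_diag, Rabs_R0.
      unfold S0, Im; cbn [snd]. lra.
Qed.

Definition S0_proj (x : C) : C :=
  if Rle_dec (Im x) (PI - Im x) then (Re x, 0) else (Re x, PI).

Lemma boundary_S0_proj x : boundary S0 (S0_proj x).
Proof.
  apply boundary_S0_iff. unfold S0_proj.
  destruct (Rle_dec (Im x) (PI - Im x)); [left | right]; reflexivity.
Qed.

Lemma Cmod_sub_S0_proj x :
  S0 x -> Cmod (Cminus x (S0_proj x)) = Rmin (Im x) (PI - Im x).
Proof.
  destruct x as [a b]. unfold S0, S0_proj, Rmin, Re, Im; cbn [fst snd]. intros Hx.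
  destruct (Rle_dec b (PI - b)); rewrite Cmod_sub_vertical;
    [rewrite Rabs_right | rewrite Rabs_left]; lra.
Qed.

Lemma Rmin_le_Cmod_sub_boundary_S0 x z :
  boundary S0 z -> Rmin (Im x) (PI - Im x) <= Cmod (Cminus x z).
Proof.
  intros Hz. pose proof (Rabs_Im_sub_le_Cmod x z) as H. apply Rabs_le_between in H.
  pose proof (Rmin_l (Im x) (PI - Im x)). pose proof (Rmin_r (Im x) (PI - Im x)).
  apply boundary_S0_iff in Hz. lra.
Qed.

Lemma dist_bd_S0 x : S0 x -> dist_bd S0 x = Rmin (Im x) (PI - Im x).
Proof.
  intros Hx. unfold dist_bd.
  destruct (Glb_Rbar_bounds (fun r => exists z, boundary S0 z /\ r = Cmod (Cminus x z))
              (Rmin (Im x) (PI - Im x)) (Cmod (Cminus x (S0_proj x)))) as [Hlow Hup].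
  - intros e [z [Hz ->]]. now apply Rmin_le_Cmod_sub_boundary_S0.
  - exists (S0_proj x). split; [apply boundary_S0_proj | reflexivity].
  - apply Rle_antisym; [| exact Hlow].
    rewrite <- (Cmod_sub_S0_proj x Hx). apply Hup.
    exists (S0_proj x). split; [apply boundary_S0_proj | reflexivity].
Qed.

Lemma dist_bd_S0_pos x : S0 x -> 0 < dist_bd S0 x.
Proof.
  intros Hx. rewrite dist_bd_S0 by exact Hx. destruct Hx. apply Rmin_glb_lt; lra.
Qed.

Lemma dist_bd_S0_mul_le x y h :
  S0 x -> S0 y -> h = 0 \/ h = PI ->
  dist_bd S0 x * dist_bd S0 y <= (Im x - h) * (Im y - h).
Proof.
  intros Hx Hy Hh.
  pose proof (dist_bd_S0_pos x Hx). pose proof (dist_bd_S0_pos y Hy).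
  rewrite (dist_bd_S0 x Hx), (dist_bd_S0 y Hy) in *.
  pose proof (Rmin_l (Im x) (PI - Im x)). pose proof (Rmin_r (Im x) (PI - Im x)).
  pose proof (Rmin_l (Im y) (PI - Im y)). pose proof (Rmin_r (Im y) (PI - Im y)).
  destruct Hh as [-> | ->].
  - rewrite !Rminus_0_r. apply Rmult_le_compat; lra.
  - replace ((Im x - PI) * (Im y - PI)) with ((PI - Im x) * (PI - Im y)) by ring.
    apply Rmult_le_compat; lra.
Qed.

Definition path_inf (G : C -> Prop) (x y : C) : R :=
  real (Glb_Rbar (fun r => exists z, boundary G z /\
                             r = Cmod (Cminus x z) + Cmod (Cminus z y))).

Lemma s_metric_path_inf G x y : s_metric G x y = Cmod (Cminus x y) / path_inf G x y.
Proof. reflexivity. Qed.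

Lemma path_inf_S0_bounds x y :
  S0 x -> S0 y ->
  sqrt (Cmod (Cminus x y) ^ 2 + 4 * dist_bd S0 x * dist_bd S0 y) <= path_inf S0 x y /\
  forall z, boundary S0 z -> path_inf S0 x y <= Cmod (Cminus x z) + Cmod (Cminus z y).
Proof.
  intros Hx Hy. unfold path_inf.
  destruct (Glb_Rbar_bounds
              (fun r => exists z, boundary S0 z /\ r = Cmod (Cminus x z) + Cmod (Cminus z y))
              (sqrt (Cmod (Cminus x y) ^ 2 + 4 * dist_bd S0 x * dist_bd S0 y))
              (Cmod (Cminus x (S0_proj x)) + Cmod (Cminus (S0_proj x) y)))
    as [Hlow Hup].
  - intros e [z [Hz ->]].
    eapply Rle_trans; [| exact (path_via_line_ge (Im z) x y z eq_refl)].
    apply sqrt_le_1_alt.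
    pose proof (dist_bd_S0_mul_le x y (Im z) Hx Hy (proj1 (boundary_S0_iff z) Hz)).
    lra.
  - exists (S0_proj x). split; [apply boundary_S0_proj | reflexivity].
  - split; [exact Hlow |]. intros z Hz. apply Hup. now exists z.
Qed.

Lemma path_inf_S0_le x y :
  S0 x -> S0 y ->
  path_inf S0 x y <= Cmod (Cminus x y) + 2 * Rmin (dist_bd S0 x) (dist_bd S0 y).
Proof.
  intros Hx Hy. destruct (path_inf_S0_bounds x y Hx Hy) as [_ Hup].
  pose proof (Hup _ (boundary_S0_proj x)) as Hvia_x.
  pose proof (Hup _ (boundary_S0_proj y)) as Hvia_y.
  pose proof (Cmod_sub_triangle (S0_proj x) x y) as Tx.
  pose proof (Cmod_sub_triangle x y (S0_proj y)) as Ty.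
  rewrite (Cmod_sub_sym (S0_proj x) x) in Tx.
  rewrite (Cmod_sub_sym (S0_proj y) y) in Hvia_y.
  rewrite (dist_bd_S0 x Hx), (dist_bd_S0 y Hy), <- (Cmod_sub_S0_proj x Hx),
    <- (Cmod_sub_S0_proj y Hy).
  unfold Rmin. destruct (Rle_dec _ _); lra.
Qed.

Lemma S0_metric_comparisons x y :
  S0 x -> S0 y ->
  (jstar S0 x y <= p_metric S0 x y /\ p_metric S0 x y <= sqrt 2 * jstar S0 x y) /\
  (jstar S0 x y <= s_metric S0 x y /\ s_metric S0 x y <= sqrt 2 * jstar S0 x y) /\
  (p_metric S0 x y / sqrt 2 <= s_metric S0 x y /\ s_metric S0 x y <= p_metric S0 x y).
Proof.
  intros Hx Hy.
  pose proof (dist_bd_S0_pos x Hx). pose proof (dist_bd_S0_pos y Hy).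
  pose proof (Cmod_ge_0 (Cminus x y)).
  unfold jstar, p_metric. rewrite s_metric_path_inf.
  apply ratio_comparisons.
  - assumption.
  - apply sqrt_lt_R0. pose proof (pow2_ge_0 (Cmod (Cminus x y))). nra.
  - apply path_inf_S0_bounds; assumption.
  - apply path_inf_S0_le; assumption.
  - apply add_min_le_sqrt2_sqrt_sum; lra.
Qed.

Lemma S0_pair a b : 0 < b < PI -> S0 (a, b).
Proof. easy. Qed.

Lemma S0_height_1 r : S0 (r, 1).
Proof. pose proof PI_gt_3. apply S0_pair. lra. Qed.

Lemma dist_bd_S0_height_1 r : dist_bd S0 (r, 1) = 1.
Proof.
  pose proof PI_gt_3. rewrite dist_bd_S0 by apply S0_height_1.
  unfold Im; cbn [snd]. apply Rmin_left. lra.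
Qed.

Lemma Cmod_sub_horizontal_pair a : 0 < a -> Cmod (Cminus (0, 1) (a, 1)) = a.
Proof.
  intros Ha. rewrite Cmod_sub_pair.
  replace ((0 - a) ^ 2 + (1 - 1) ^ 2) with (a ^ 2) by ring.
  apply sqrt_pow2. lra.
Qed.

Lemma jstar_horizontal_pair a : 0 < a -> jstar S0 (0, 1) (a, 1) = a / (a + 2).
Proof.
  intros Ha. unfold jstar.
  rewrite Cmod_sub_horizontal_pair, !dist_bd_S0_height_1, Rmin_left by lra.
  f_equal. ring.
Qed.

Lemma p_metric_horizontal_pair a :
  0 < a -> p_metric S0 (0, 1) (a, 1) = a / sqrt (a ^ 2 + 4).
Proof.
  intros Ha. unfold p_metric.
  rewrite Cmod_sub_horizontal_pair, !dist_bd_S0_height_1 by exact Ha.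
  do 2 f_equal. ring.
Qed.

Lemma s_metric_horizontal_pair a :
  0 < a -> s_metric S0 (0, 1) (a, 1) = p_metric S0 (0, 1) (a, 1).
Proof.
  intros Ha. rewrite s_metric_path_inf. unfold p_metric. f_equal.
  destruct (path_inf_S0_bounds _ _ (S0_height_1 0) (S0_height_1 a)) as [Hlow Hup].
  apply Rle_antisym; [| exact Hlow].
  assert (Hmid : boundary S0 (a / 2, 0)) by (apply boundary_S0_iff; now left).
  eapply Rle_trans; [exact (Hup _ Hmid) |].
  rewrite Cmod_sub_horizontal_pair, !dist_bd_S0_height_1, !Cmod_sub_pair by exact Ha.
  replace ((0 - a / 2) ^ 2 + (1 - 0) ^ 2) with (a ^ 2 / 4 + 1) by field.
  replace ((a / 2 - a) ^ 2 + (0 - 1) ^ 2) with (a ^ 2 / 4 + 1) by field.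
  apply le_sqrt_of_sq_le.
  - pose proof (sqrt_pos (a ^ 2 / 4 + 1)). lra.
  - replace ((sqrt (a ^ 2 / 4 + 1) + sqrt (a ^ 2 / 4 + 1)) ^ 2)
      with (4 * sqrt (a ^ 2 / 4 + 1) ^ 2) by ring.
    rewrite pow2_sqrt by nra. lra.
Qed.

Lemma p_metric_horizontal_pair_2 : p_metric S0 (0, 1) (2, 1) = / sqrt 2.
Proof.
  rewrite p_metric_horizontal_pair by lra.
  replace (2 ^ 2 + 4) with (2 * 2 * 2) by ring.
  rewrite sqrt_mult, sqrt_square by lra. field. apply sqrt2_neq_0.
Qed.

Lemma p_metric_vertical_pair : p_metric S0 (0, PI / 4) (0, 3 * PI / 4) = / sqrt 2.
Proof.
  pose proof PI_gt_3.
  unfold p_metric.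
  rewrite !dist_bd_S0, Cmod_sub_vertical by (apply S0_pair; lra).
  unfold Im; cbn [snd].
  rewrite Rmin_left, Rmin_right, Rabs_left by lra.
  replace ((- (PI / 4 - 3 * PI / 4)) ^ 2 + 4 * (PI / 4) * (PI - 3 * PI / 4))
    with ((PI / 2) * (PI / 2) * 2) by field.
  rewrite sqrt_mult, sqrt_square by nra. field. split; [apply sqrt2_neq_0 | lra].
Qed.

Lemma s_metric_vertical_pair_le : s_metric S0 (0, PI / 4) (0, 3 * PI / 4) <= / 2.
Proof.
  pose proof PI_gt_3.
  rewrite s_metric_path_inf, Cmod_sub_vertical. unfold path_inf.
  destruct (Glb_Rbar_bounds
              (fun r => exists z, boundary S0 z /\
                 r = Cmod (Cminus (0, PI / 4) z) + Cmod (Cminus z (0, 3 * PI / 4)))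
              PI (Cmod (Cminus (0, PI / 4) (0, 0)) + Cmod (Cminus (0, 0) (0, 3 * PI / 4))))
    as [Hlow _].
  - intros e [z [Hz ->]].
    pose proof (Rabs_Im_sub_le_Cmod (0, PI / 4) z) as H1.
    pose proof (Rabs_Im_sub_le_Cmod z (0, 3 * PI / 4)) as H2.
    apply Rabs_le_between in H1, H2. unfold Im in *; cbn [snd] in *.
    apply boundary_S0_iff in Hz as [E | E]; unfold Im in E; rewrite E in *; lra.
  - exists (0, 0). split; [apply boundary_S0_iff; now left | reflexivity].
  - rewrite Rabs_left by lra.
    replace (/ 2) with (1 * (- (PI / 4 - 3 * PI / 4) / PI)) by (field; lra).
    apply Rdiv_le_scale; lra.
Qed.

Lemma Rinv_sqrt2 : / sqrt 2 = sqrt 2 / 2.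
Proof.
  pose proof (sqrt_sqrt 2 ltac:(lra)) as H2. pose proof sqrt2_neq_0.
  apply (Rmult_eq_reg_l (sqrt 2)); [| assumption].
  rewrite Rinv_r by assumption. lra.
Qed.

Lemma horizontal_ratio_lt c :
  1 < c -> exists a, 0 < a /\ a / sqrt (a ^ 2 + 4) < c * (a / (a + 2)).
Proof.
  (* a (c - 1) > 2 gives a + 2 < c a < c sqrt (a^2 + 4). *)
  intros Hc. set (a := 2 / (c - 1) + 1).
  assert (0 < 2 / (c - 1)) by (apply Rdiv_lt_0_compat; lra).
  assert (Ha : 0 < a) by (unfold a; lra).
  assert (Hac : a * (c - 1) = 2 + (c - 1)) by (unfold a; field; lra).
  assert (Hsq : a < sqrt (a ^ 2 + 4)) by (apply lt_sqrt_of_sq_lt; lra).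
  exists a. split; [exact Ha |].
  apply Rdiv_lt_scale; nra.
Qed.

Lemma p_metric_lt_scaled_jstar c :
  1 < c -> exists x y : C, S0 x /\ S0 y /\ p_metric S0 x y < c * jstar S0 x y.
Proof.
  intros Hc. destruct (horizontal_ratio_lt c Hc) as (a & Ha & H).
  exists (0, 1), (a, 1).
  rewrite p_metric_horizontal_pair, jstar_horizontal_pair by exact Ha.
  exact (conj (S0_height_1 0) (conj (S0_height_1 a) H)).
Qed.

Lemma s_metric_lt_scaled_jstar c :
  1 < c -> exists x y : C, S0 x /\ S0 y /\ s_metric S0 x y < c * jstar S0 x y.
Proof.
  intros Hc. destruct (horizontal_ratio_lt c Hc) as (a & Ha & H).
  exists (0, 1), (a, 1).
  rewrite s_metric_horizontal_pair, p_metric_horizontal_pair, jstar_horizontal_pair by exact Ha.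
  exact (conj (S0_height_1 0) (conj (S0_height_1 a) H)).
Qed.

Lemma scaled_jstar_lt_p_metric c :
  c < sqrt 2 -> exists x y : C, S0 x /\ S0 y /\ c * jstar S0 x y < p_metric S0 x y.
Proof.
  intros Hc. exists (0, 1), (2, 1).
  rewrite p_metric_horizontal_pair_2, jstar_horizontal_pair, Rinv_sqrt2 by lra.
  split; [apply S0_height_1 | split; [apply S0_height_1 | lra]].
Qed.

Lemma scaled_jstar_lt_s_metric c :
  c < sqrt 2 -> exists x y : C, S0 x /\ S0 y /\ c * jstar S0 x y < s_metric S0 x y.
Proof.
  intros Hc. exists (0, 1), (2, 1).
  rewrite s_metric_horizontal_pair, p_metric_horizontal_pair_2, jstar_horizontal_pair,
    Rinv_sqrt2 by lra.
  split; [apply S0_height_1 | split; [apply S0_height_1 | lra]].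
Qed.

Lemma s_metric_lt_scaled_p_metric c :
  / sqrt 2 < c -> exists x y : C, S0 x /\ S0 y /\ s_metric S0 x y < c * p_metric S0 x y.
Proof.
  intros Hc. pose proof PI_gt_3.
  exists (0, PI / 4), (0, 3 * PI / 4).
  split; [apply S0_pair; lra | split; [apply S0_pair; lra |]].
  rewrite p_metric_vertical_pair.
  assert (Hhalf : / 2 = / sqrt 2 * / sqrt 2)
    by (rewrite <- Rinv_mult, sqrt_sqrt by lra; reflexivity).
  assert (0 < / sqrt 2) by (apply Rinv_0_lt_compat, Rlt_sqrt2_0).
  pose proof s_metric_vertical_pair_le. nra.
Qed.

Lemma scaled_p_metric_lt_s_metric c :
  c < 1 -> exists x y : C, S0 x /\ S0 y /\ c * p_metric S0 x y < s_metric S0 x y.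
Proof.
  intros Hc. exists (0, 1), (2, 1).
  rewrite s_metric_horizontal_pair, p_metric_horizontal_pair_2 by lra.
  assert (0 < / sqrt 2) by (apply Rinv_0_lt_compat, Rlt_sqrt2_0).
  split; [apply S0_height_1 | split; [apply S0_height_1 | nra]].
Qed.

Theorem theorem3p12 :
  (* (1) *)
  (forall x y : C, S0 x -> S0 y ->
     jstar S0 x y <= p_metric S0 x y /\
     p_metric S0 x y <= sqrt 2 * jstar S0 x y) /\
  (forall c : R, 1 < c ->
     exists x y : C, S0 x /\ S0 y /\ p_metric S0 x y < c * jstar S0 x y) /\
  (forall c : R, c < sqrt 2 ->
     exists x y : C, S0 x /\ S0 y /\ c * jstar S0 x y < p_metric S0 x y) /\
  (* (2) *)
  (forall x y : C, S0 x -> S0 y ->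
     jstar S0 x y <= s_metric S0 x y /\
     s_metric S0 x y <= sqrt 2 * jstar S0 x y) /\
  (forall c : R, 1 < c ->
     exists x y : C, S0 x /\ S0 y /\ s_metric S0 x y < c * jstar S0 x y) /\
  (forall c : R, c < sqrt 2 ->
     exists x y : C, S0 x /\ S0 y /\ c * jstar S0 x y < s_metric S0 x y) /\
  (* (3) *)
  (forall x y : C, S0 x -> S0 y ->
     p_metric S0 x y / sqrt 2 <= s_metric S0 x y /\
     s_metric S0 x y <= p_metric S0 x y) /\
  (forall c : R, / sqrt 2 < c ->
     exists x y : C, S0 x /\ S0 y /\ s_metric S0 x y < c * p_metric S0 x y) /\
  (forall c : R, c < 1 ->
     exists x y : C, S0 x /\ S0 y /\ c * p_metric S0 x y < s_metric S0 x y).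
Proof.
  refine (conj _ (conj _ (conj _ (conj _ (conj _ (conj _ (conj _ (conj _ _)))))))).
  - intros x y Hx Hy. exact (proj1 (S0_metric_comparisons x y Hx Hy)).
  - exact p_metric_lt_scaled_jstar.
  - exact scaled_jstar_lt_p_metric.
  - intros x y Hx Hy. exact (proj1 (proj2 (S0_metric_comparisons x y Hx Hy))).
  - exact s_metric_lt_scaled_jstar.
  - exact scaled_jstar_lt_s_metric.
  - intros x y Hx Hy. exact (proj2 (proj2 (S0_metric_comparisons x y Hx Hy))).
  - exact s_metric_lt_scaled_p_metric.
  - exact scaled_p_metric_lt_s_metric.
Qed.
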